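(* Let $\mathcal{L}$, $\mathcal{C}$, $\mathcal{M}$, the types $\sigma_C,\rho_C,\sigma_M,\rho^1_M,\rho^2_M$, the label sets $L_M$ and the repository $\Delta^{\mathcal{C},\mathcal{M}}_{\mathcal{L}}$ be as in the context. Let $\Gamma$ be a finite basis with $\Gamma\subseteq\{x_C:\sigma_C\to\rho_C\mid C\in\mathcal{C}\}\cup\{x^{\rho}_M:(\sigma_M\to\rho\cap\rho^1_M)\to(\sigma_M\to\rho+\rho^2_M)\mid M\in\mathcal{M},\ \rho\in\mathbb{T}_R,\ [\![\rho]\!]\text{ defined}\}$ (where $x_C$, $x^\rho_M$ are distinct term variables), and let $\sigma\in\mathbb{T}$, $\rho\in\mathbb{T}_R$ be such that $[\![\sigma\to\rho]\!]$ is defined. Let $k=\max(\{\mathrm{level}([\![\rho_C]\!])\mid C\in\mathcal{C}\}\cup\{\mathrm{level}([\![\rho^2_M]\!])\mid M\in\mathcal{M}\}\cup\{\mathrm{level}([\![\rho]\!])\})$. Let $M_1,\ldots,M_n\in\mathcal{M}$ and $C\in\mathcal{C}$. If $\Gamma\vdash x_C\triangleright x^{\rho_1}_{M_1}\triangleright\cdots\triangleright x^{\rho_n}_{M_n}:\sigma\to\rho$ in the type assignment system for $\Lambda_R$, then $\Delta^{\mathcal{C},\mathcal{M}}_{\mathcal{L}}\vdash_k C\triangleright M_1\triangleright\cdots\triangleright M_n:[\![\sigma\to\rho]\!]$ in $\mathsf{BCL}_k(\mathbb{T}_C)$.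
   Context: \textbf{The calculus $\Lambda_R$.} Terms: $M,N ::= x \mid \lambda x.M \mid MN \mid M.l \mid R \mid M\oplus R$, records $R ::= \langle l_i = M_i \mid i\in I\rangle$ ($I$ finite, labels pairwise distinct), $\mathit{lbl}(\langle l_i=M_i\mid i\in I\rangle)=\{l_i\mid i\in I\}$. $\mathbf{Y}=\lambda f.(\lambda x.f(xx))(\lambda x.f(xx))$. A class is a closed term $\mathbf{Y}(\lambda\,\mathit{myClass}\,\lambda\,\mathit{state}.\,R)$; a mixin is a closed term $\lambda\,\mathit{argClass}.\,\mathbf{Y}(\lambda\,\mathit{myClass}\,\lambda\,\mathit{state}.\,(\mathit{argClass}\;\mathit{state})\oplus R_M)$ with $R_M$ a record. \textbf{Types for $\Lambda_R$.} $\mathbb{T}\ni\sigma ::= a\mid\omega\mid\sigma_1\to\sigma_2\mid\sigma_1\cap\sigma_2\mid\rho$, $\mathbb{T}_R\ni\rho ::= \langle\rangle\mid\langle l:\sigma\rangle\mid\rho_1+\rho_2\mid\rho_1\cap\rho_2$. Subtyping $\le$ is the least preorder with: $\sigma\le\omega$; $\omega\le\omega\to\omega$; $\sigma\cap\tau\le\sigma$; $\sigma\cap\tau\le\tau$; $\sigma\le\tau_1,\sigma\le\tau_2\Rightarrow\sigma\le\tau_1\cap\tau_2$; $(\sigma\to\tau_1)\cap(\sigma\to\tau_2)\le\sigma\to\tau_1\cap\tau_2$; $\sigma_2\le\sigma_1,\tau_1\le\tau_2\Rightarrow\sigma_1\to\tau_1\le\sigma_2\to\tau_2$; $\langle l:\sigma\rangle\le\langle\rangle$;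 $\langle l:\sigma\rangle\cap\langle l:\tau\rangle\le\langle l:\sigma\cap\tau\rangle$; $\sigma\le\tau\Rightarrow\langle l:\sigma\rangle\le\langle l:\tau\rangle$; $\rho+\langle\rangle=\langle\rangle+\rho=\rho$; $(\rho_1+\rho_2)+\rho_3=\rho_1+(\rho_2+\rho_3)$; $(\rho_1\cap\rho_2)+\rho_3=(\rho_1+\rho_3)\cap(\rho_2+\rho_3)$; $\langle l:\sigma\rangle+(\langle l:\tau\rangle\cap\rho)=\langle l:\tau\rangle\cap\rho$; $\langle l:\sigma\rangle+(\langle l':\tau\rangle\cap\rho)=\langle l':\tau\rangle\cap(\langle l:\sigma\rangle+\rho)$ if $l\neq l'$; $\rho_1\le\rho_2\Rightarrow\rho_1+\rho\le\rho_2+\rho$; $\rho_1=\rho_2\Rightarrow\rho+\rho_1=\rho+\rho_2$ ($=$ meaning $\le$ both ways). $\mathit{lbl}(\langle\rangle)=\emptyset$, $\mathit{lbl}(\langle l:\sigma\rangle)=\{l\}$, $\mathit{lbl}(\rho_1\cap\rho_2)=\mathit{lbl}(\rho_1+\rho_2)=\mathit{lbl}(\rho_1)\cup\mathit{lbl}(\rho_2)$. \textbf{Type assignment for $\Lambda_R$}: variable axiom from the basis; $\to$-introduction/elimination; $\cap$-introduction; $\Gamma\vdash M:\omega$; subsumption along $\le$; $\Gamma\vdash\langle l_i=M_i\mid i\in I\rangle:\langle\rangle$; from $\Gamma\vdash M_k:\sigma$, $k\in I$ infer $\Gamma\vdash\langle l_i=M_i\mid i\in I\rangle:\langle l_k:\sigma\rangle$;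 from $\Gamma\vdash M:\langle l:\sigma\rangle$ infer $\Gamma\vdash M.l:\sigma$; from $\Gamma\vdash M:\rho_1$, $\Gamma\vdash R:\rho_2$, $\mathit{lbl}(R)=\mathit{lbl}(\rho_2)$ infer $\Gamma\vdash M\oplus R:\rho_1+\rho_2$. \textbf{$\mathsf{BCL}_k(\mathbb{T}_C)$.} Types $\mathbb{T}_C\ni\tau ::= a\mid\alpha\mid\omega\mid\tau_1\to\tau_2\mid\tau_1\cap\tau_2\mid c(\tau)$; subtyping: the arrow/intersection axioms above plus $\tau_1\le\tau_2\Rightarrow c(\tau_1)\le c(\tau_2)$ and $c(\tau_1)\cap c(\tau_2)\le c(\tau_1\cap\tau_2)$. Level: $0$ for $\omega,a,\alpha$; $\mathrm{level}(c(\tau))=1+\mathrm{level}(\tau)$; $\mathrm{level}(\sigma\to\tau)=1+\max(\mathrm{level}(\sigma),\mathrm{level}(\tau))$; $\mathrm{level}(\sigma\cap\tau)=\max(\mathrm{level}(\sigma),\mathrm{level}(\tau))$; $\mathrm{level}(S)=\max_{\alpha\in\mathrm{dom}(S)}\mathrm{level}(S(\alpha))$ for substitutions $S$. A repository $\Delta$ is a finite set of $C:\tau$; combinatory terms $E::=C\mid(E\,E')$. Rules: from $C:\tau\in\Delta$, $\mathrm{level}(S)\le k$ infer $\Delta\vdash_k C:S(\tau)$; $\to$-elimination; $\cap$-introduction; subsumption. \textbf{Translation.} Fixed finite label set $\mathcal{L}$, unary constructors $\langle\!\langle\cdot\rangle\!\rangle$ and $l(\cdot)$ for $l\in\mathcal{L}$;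 partial map $[\![\omega]\!]=\omega$, $[\![a]\!]=a$, $[\![\sigma\to\tau]\!]=[\![\sigma]\!]\to[\![\tau]\!]$, $[\![\sigma\cap\tau]\!]=[\![\sigma]\!]\cap[\![\tau]\!]$, $[\![\langle l:\tau\rangle]\!]=\langle\!\langle l([\![\tau]\!])\rangle\!\rangle$, $[\![\langle\rangle]\!]=\langle\!\langle\omega\rangle\!\rangle$; undefined on types containing $+$. \textbf{Setting.} $\mathcal{C}$ finite set of classes with $\sigma_C,\rho_C$, $[\![\sigma_C\to\rho_C]\!]$ defined, $\vdash C:\sigma_C\to\rho_C$. $\mathcal{M}$ finite set of mixins with $\sigma_M,\rho^1_M,\rho^2_M$ whose translations are defined and such that for all $\rho\in\mathbb{T}_R$, $\vdash M:(\sigma_M\to\rho\cap\rho^1_M)\to(\sigma_M\to\rho+\rho^2_M)$; $L_M=\mathit{lbl}(\rho^2_M)\subseteq\mathcal{L}$ non-empty, the labels defined by $M$. Repository $\Delta^{\mathcal{C},\mathcal{M}}_{\mathcal{L}}=\{C:[\![\sigma_C\to\rho_C]\!]\}\cup\{M:(([\![\sigma_M]\!]\to[\![\rho^1_M]\!])\to([\![\sigma_M]\!]\to[\![\rho^2_M]\!]))\cap\bigcap_{l\in\mathcal{L}\setminus L_M}(([\![\sigma_M]\!]\to\langle\!\langle l(\alpha_l)\rangle\!\rangle)\to([\![\sigma_M]\!]\to\langle\!\langle l(\alpha_l)\rangle\!\rangle))\}$. $x\triangleright f$ means $f\,x$, left associative. *)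

From Stdlib Require Import List Arith PeanoNat.
Import ListNotations.

Definition label := nat.
Definition var := nat.

Inductive term : Type :=
| Var (x : var)
| Lam (x : var) (M : term)
| App (M N : term)
| Sel (M : term) (l : label)
| Rec (r : list (label * term))
| Ext (M : term) (r : list (label * term)).

Fixpoint fv (t : term) : list var :=
  match t with
  | Var x => [x]
  | Lam x M => remove Nat.eq_dec x (fv M)
  | App M N => fv M ++ fv N
  | Sel M _ => fv M
  | Rec r => (fix g (r : list (label * term)) : list var :=
                match r with [] => [] | (_, M) :: r' => fv M ++ g r' end) r
  | Ext M r => fv M ++ (fix g (r : list (label * term)) : list var :=
                match r with [] => [] | (_, M) :: r' => fv M ++ g r' end) r
  end.

Definition closed (t : term) : Prop := fv t = [].

Fixpoint wf_term (t : term) : Prop :=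
  match t with
  | Var _ => True
  | Lam _ M => wf_term M
  | App M N => wf_term M /\ wf_term N
  | Sel M _ => wf_term M
  | Rec r => NoDup (map fst r) /\
      (fix g (r : list (label * term)) : Prop :=
         match r with [] => True | (_, M) :: r' => wf_term M /\ g r' end) r
  | Ext M r => wf_term M /\ NoDup (map fst r) /\
      (fix g (r : list (label * term)) : Prop :=
         match r with [] => True | (_, M) :: r' => wf_term M /\ g r' end) r
  end.

Definition Ycomb (f x : var) : term :=
  Lam f (App (Lam x (App (Var f) (App (Var x) (Var x))))
             (Lam x (App (Var f) (App (Var x) (Var x))))).

Definition is_class (C : term) : Prop :=
  closed C /\ wf_term C /\
  exists f x mc st r, f <> x /\ C = App (Ycomb f x) (Lam mc (Lam st (Rec r))).

Definition is_mixin (M : term) : Prop :=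
  closed M /\ wf_term M /\
  exists ac f x mc st r, f <> x /\
    M = Lam ac (App (Ycomb f x)
                    (Lam mc (Lam st (Ext (App (Var ac) (Var st)) r)))).

Inductive ty : Type :=
| TAtom (a : nat)
| TOmega
| TArr (s t : ty)
| TInt (s t : ty)
| TEmpty
| TField (l : label) (s : ty)
| TPlus (r1 r2 : ty).

(* wf_ty s : s in T ;  is_rty r : r in T_R *)
Fixpoint wf_ty (s : ty) : bool :=
  match s with
  | TAtom _ | TOmega | TEmpty => true
  | TArr a b | TInt a b => wf_ty a && wf_ty b
  | TField _ a => wf_ty a
  | TPlus a b => is_rty a && is_rty b
  end
with is_rty (r : ty) : bool :=
  match r with
  | TEmpty => true
  | TField _ a => wf_ty a
  | TPlus a b | TInt a b => is_rty a && is_rty b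
  | _ => false
  end.

Fixpoint lbl_ty (r : ty) : list label :=
  match r with
  | TField l _ => [l]
  | TPlus a b | TInt a b => lbl_ty a ++ lbl_ty b
  | _ => []
  end.

Definition same_labels (a b : list label) : Prop := forall l, In l a <-> In l b.

Inductive sub : ty -> ty -> Prop :=
| sub_refl s : wf_ty s = true -> sub s s
| sub_trans s t u : sub s t -> sub t u -> sub s u
| sub_omega s : wf_ty s = true -> sub s TOmega
| sub_omega_arr : sub TOmega (TArr TOmega TOmega)
| sub_int_l s t : wf_ty s = true -> wf_ty t = true -> sub (TInt s t) s
| sub_int_r s t : wf_ty s = true -> wf_ty t = true -> sub (TInt s t) t
| sub_int_glb s t1 t2 : sub s t1 -> sub s t2 -> sub s (TInt t1 t2)
| sub_arr_dist s t1 t2 : wf_ty s = true -> wf_ty t1 = true -> wf_ty t2 = true ->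
    sub (TInt (TArr s t1) (TArr s t2)) (TArr s (TInt t1 t2))
| sub_arr s1 s2 t1 t2 : sub s2 s1 -> sub t1 t2 -> sub (TArr s1 t1) (TArr s2 t2)
| sub_field_empty l s : wf_ty s = true -> sub (TField l s) TEmpty
| sub_field_int l s t : wf_ty s = true -> wf_ty t = true ->
    sub (TInt (TField l s) (TField l t)) (TField l (TInt s t))
| sub_field l s t : sub s t -> sub (TField l s) (TField l t)
| sub_plus_empty_r1 r : is_rty r = true -> sub (TPlus r TEmpty) r
| sub_plus_empty_r2 r : is_rty r = true -> sub r (TPlus r TEmpty)
| sub_plus_empty_l1 r : is_rty r = true -> sub (TPlus TEmpty r) r
| sub_plus_empty_l2 r : is_rty r = true -> sub r (TPlus TEmpty r)
| sub_plus_assoc1 r1 r2 r3 : is_rty r1 = true -> is_rty r2 = true -> is_rty r3 = true ->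
    sub (TPlus (TPlus r1 r2) r3) (TPlus r1 (TPlus r2 r3))
| sub_plus_assoc2 r1 r2 r3 : is_rty r1 = true -> is_rty r2 = true -> is_rty r3 = true ->
    sub (TPlus r1 (TPlus r2 r3)) (TPlus (TPlus r1 r2) r3)
| sub_plus_dist1 r1 r2 r3 : is_rty r1 = true -> is_rty r2 = true -> is_rty r3 = true ->
    sub (TPlus (TInt r1 r2) r3) (TInt (TPlus r1 r3) (TPlus r2 r3))
| sub_plus_dist2 r1 r2 r3 : is_rty r1 = true -> is_rty r2 = true -> is_rty r3 = true ->
    sub (TInt (TPlus r1 r3) (TPlus r2 r3)) (TPlus (TInt r1 r2) r3)
| sub_plus_same1 l s t r : wf_ty s = true -> wf_ty t = true -> is_rty r = true ->
    sub (TPlus (TField l s) (TInt (TField l t) r)) (TInt (TField l t) r)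
| sub_plus_same2 l s t r : wf_ty s = true -> wf_ty t = true -> is_rty r = true ->
    sub (TInt (TField l t) r) (TPlus (TField l s) (TInt (TField l t) r))
| sub_plus_diff1 l l' s t r : l <> l' -> wf_ty s = true -> wf_ty t = true -> is_rty r = true ->
    sub (TPlus (TField l s) (TInt (TField l' t) r)) (TInt (TField l' t) (TPlus (TField l s) r))
| sub_plus_diff2 l l' s t r : l <> l' -> wf_ty s = true -> wf_ty t = true -> is_rty r = true ->
    sub (TInt (TField l' t) (TPlus (TField l s) r)) (TPlus (TField l s) (TInt (TField l' t) r))
| sub_plus_mono_l r1 r2 r : is_rty r1 = true -> is_rty r2 = true -> is_rty r = true ->
    sub r1 r2 -> sub (TPlus r1 r) (TPlus r2 r)
| sub_plus_cong_r r r1 r2 : is_rty r = true -> is_rty r1 = true -> is_rty r2 = true ->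
    sub r1 r2 -> sub r2 r1 -> sub (TPlus r r1) (TPlus r r2).

Definition basis := list (var * ty).

Definition ext_basis (G : basis) (x : var) (s : ty) : basis :=
  (x, s) :: filter (fun p => negb (Nat.eqb (fst p) x)) G.

Inductive typed : basis -> term -> ty -> Prop :=
| ty_var G x s : In (x, s) G -> typed G (Var x) s
| ty_abs G x M s t : wf_ty s = true -> typed (ext_basis G x s) M t ->
    typed G (Lam x M) (TArr s t)
| ty_app G M N s t : typed G M (TArr s t) -> typed G N s -> typed G (App M N) t
| ty_int G M s t : typed G M s -> typed G M t -> typed G M (TInt s t)
| ty_omega G M : typed G M TOmega
| ty_sub G M s t : typed G M s -> sub s t -> typed G M t
| ty_rec_empty G r : typed G (Rec r) TEmpty
| ty_rec_field G r l M s : In (l, M) r -> typed G M s -> typed G (Rec r) (TField l s)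
| ty_sel G M l s : typed G M (TField l s) -> typed G (Sel M l) s
| ty_ext G M r r1 r2 : is_rty r1 = true -> is_rty r2 = true ->
    typed G M r1 -> typed G (Rec r) r2 ->
    same_labels (map fst r) (lbl_ty r2) ->
    typed G (Ext M r) (TPlus r1 r2).

Inductive ctor : Type :=
| CRec
| CLab (l : label).

Inductive cty : Type :=
| CAtom (a : nat)
| CTVar (alpha : nat)
| COmega
| CArr (s t : cty)
| CInt (s t : cty)
| CCons (c : ctor) (t : cty).

Fixpoint level (t : cty) : nat :=
  match t with
  | CAtom _ | CTVar _ | COmega => 0
  | CCons _ t => S (level t)
  | CArr s t => S (Nat.max (level s) (level t))
  | CInt s t => Nat.max (level s) (level t)
  end.

Fixpoint csubst (S : nat -> cty) (t : cty) : cty :=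
  match t with
  | CTVar a => S a
  | CArr s t => CArr (csubst S s) (csubst S t)
  | CInt s t => CInt (csubst S s) (csubst S t)
  | CCons c t => CCons c (csubst S t)
  | _ => t
  end.

Inductive csub : cty -> cty -> Prop :=
| csub_refl s : csub s s
| csub_trans s t u : csub s t -> csub t u -> csub s u
| csub_omega s : csub s COmega
| csub_omega_arr : csub COmega (CArr COmega COmega)
| csub_int_l s t : csub (CInt s t) s
| csub_int_r s t : csub (CInt s t) t
| csub_int_glb s t1 t2 : csub s t1 -> csub s t2 -> csub s (CInt t1 t2)
| csub_arr_dist s t1 t2 : csub (CInt (CArr s t1) (CArr s t2)) (CArr s (CInt t1 t2))
| csub_arr s1 s2 t1 t2 : csub s2 s1 -> csub t1 t2 -> csub (CArr s1 t1) (CArr s2 t2)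
| csub_cons c s t : csub s t -> csub (CCons c s) (CCons c t)
| csub_cons_int c s t : csub (CInt (CCons c s) (CCons c t)) (CCons c (CInt s t)).

(* combinatory terms; combinators are named by the classes / mixins themselves *)
Inductive cterm : Type :=
| Comb (c : term)
| CApp (E F : cterm).

Definition repository := list (term * cty).

(* Delta |-_k E : t.  Substitutions are total maps with level(S) <= k,
   i.e. every S alpha has level <= k (identity outside the domain has level 0). *)
Inductive ctyped (D : repository) (k : nat) : cterm -> cty -> Prop :=
| cty_var c t (S : nat -> cty) : In (c, t) D -> (forall a, level (S a) <= k) ->
    ctyped D k (Comb c) (csubst S t)
| cty_app E F s t : ctyped D k E (CArr s t) -> ctyped D k F s -> ctyped D k (CApp E F) t
| cty_int E s t : ctyped D k E s -> ctyped D k E t -> ctyped D k E (CInt s t)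
| cty_sub E s t : ctyped D k E s -> csub s t -> ctyped D k E t.

Fixpoint tr (Ls : list label) (s : ty) : option cty :=
  match s with
  | TOmega => Some COmega
  | TAtom a => Some (CAtom a)
  | TArr a b => match tr Ls a, tr Ls b with
                | Some a', Some b' => Some (CArr a' b') | _, _ => None end
  | TInt a b => match tr Ls a, tr Ls b with
                | Some a', Some b' => Some (CInt a' b') | _, _ => None end
  | TField l a => if existsb (Nat.eqb l) Ls then
                    match tr Ls a with
                    | Some a' => Some (CCons CRec (CCons (CLab l) a'))
                    | None => None end
                  else None
  | TEmpty => Some (CCons CRec COmega)
  | TPlus _ _ => None
  end.

Definition tr_defined (Ls : list label) (s : ty) : Prop := tr Ls s <> None.

(* total version, used only on types whose translation is defined *)
Definition trd (Ls : list label) (s : ty) : cty :=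
  match tr Ls s with Some t => t | None => COmega end.

Definition mixin_cty (Ls : list label) (sM r1M r2M : ty) : cty :=
  fold_left
    (fun acc l =>
       CInt acc (CArr (CArr (trd Ls sM) (CCons CRec (CCons (CLab l) (CTVar l))))
                      (CArr (trd Ls sM) (CCons CRec (CCons (CLab l) (CTVar l))))))
    (filter (fun l => negb (existsb (Nat.eqb l) (lbl_ty r2M))) Ls)
    (CArr (CArr (trd Ls sM) (trd Ls r1M)) (CArr (trd Ls sM) (trd Ls r2M))).

Definition repo (Ls : list label) (Cs Ms : list term)
  (sigC rhoC sigM rho1M rho2M : term -> ty) : repository :=
  map (fun C => (C, trd Ls (TArr (sigC C) (rhoC C)))) Cs ++
  map (fun M => (M, mixin_cty Ls (sigM M) (rho1M M) (rho2M M))) Ms.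

Definition pipe_vars (x0 : var) (fs : list var) : term :=
  fold_left (fun acc f => App (Var f) acc) fs (Var x0).

Definition pipe_combs (C : term) (Ms : list term) : cterm :=
  fold_left (fun acc M => CApp (Comb M) acc) Ms (Comb C).

(* Record concatenation has no counterpart in BCL_k, so the proof works with an
   extension of the translation to [+]: [ρ1 + ρ2] becomes [[ρ2]] intersected with
   [[ρ1]] whose fields overwritten by [ρ2] are masked to [<<ω>>]; this extension is
   monotone for subtyping.  Following the pipeline x_C ▷ x_{M_1} ▷ ⋯ ▷ x_{M_n} from
   the inside, we keep the invariant: whenever the λ-term has type [σ → ρ], the
   combinatory term has type [[[σ]] → b] for an intersection [b] of [<<ω>>]s and
   [<<l(τ)>>]s with [level τ ≤ k], lying below the translation of [ρ].  Inversion of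
   arrow subtyping (β-soundness) turns a typing of [x^ρ_M P] into one of [P]; the
   mixin then contributes [[ρ2_M]] through its main type and keeps every other field
   [<<l(τ)>>] of [b] through the instance [α_l := τ] of its field-preserving types,
   which is admissible in BCL_k precisely because [level τ ≤ k]. *)

From Stdlib Require Import List PeanoNat Bool Lia.
Import ListNotations.

Lemma rty_wf r : is_rty r = true -> wf_ty r = true.
Proof.
  induction r; simpl; intros H; try discriminate; auto.
  apply andb_true_iff in H as [H1 H2]; rewrite IHr1, IHr2; auto.
Qed.

Lemma sub_wf u v : sub u v -> wf_ty u = true /\ wf_ty v = true.
Proof.
  induction 1; simpl in *; rewrite ?andb_true_iff in *; intuition (auto using rty_wf).
Qed.

(** * Inversion of arrow subtyping *)

Fixpoint arrows (t : ty) : list (ty * ty) :=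
  match t with
  | TArr a b => [(a, b)]
  | TInt a b => arrows a ++ arrows b
  | _ => []
  end.

Fixpoint meet (l : list ty) : ty :=
  match l with
  | [] => TOmega
  | t :: l => TInt t (meet l)
  end.

Lemma rty_arrows r : is_rty r = true -> arrows r = [].
Proof.
  induction r; simpl; intros H; try discriminate; auto.
  apply andb_true_iff in H as [H1 H2]; rewrite IHr1, IHr2; auto.
Qed.

Lemma arrows_wf u p : wf_ty u = true -> In p (arrows u) ->
  wf_ty (fst p) = true /\ wf_ty (snd p) = true.
Proof.
  induction u; simpl; intros Hw Hin; try contradiction.
  - destruct Hin as [<-|[]]; simpl. apply andb_true_iff in Hw; tauto.
  - apply andb_true_iff in Hw as [H1 H2]. apply in_app_or in Hin as [H|H]; auto.
Qed.

Lemma meet_wf l : (forall t, In t l -> wf_ty t = true) -> wf_ty (meet l) = true.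
Proof.
  induction l; simpl; intros H; auto. rewrite H, IHl; auto.
Qed.

Lemma meet_glb u l : wf_ty u = true -> (forall t, In t l -> sub u t) -> sub u (meet l).
Proof.
  induction l; simpl; intros Hw H; [apply sub_omega; auto | apply sub_int_glb; auto].
Qed.

Lemma meet_lb l t : (forall t', In t' l -> wf_ty t' = true) -> In t l -> sub (meet l) t.
Proof.
  induction l; simpl; intros Hw Hin; [contradiction|].
  assert (wf_ty (meet l) = true) by (apply meet_wf; auto).
  destruct Hin as [<-|Hin]; [apply sub_int_l; auto|].
  eapply sub_trans; [apply sub_int_r; auto | apply IHl; auto].
Qed.

Lemma meet_incl l l' : (forall t, In t l -> wf_ty t = true) -> incl l' l -> sub (meet l) (meet l').
Proof.
  intros Hw Hincl. apply meet_glb; [apply meet_wf; auto|]. intros t Ht; apply meet_lb; auto.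
Qed.

(* The invariant of beta-soundness: applied to an argument of type [s], a term
   of type [u] gets type [t] using only the arrows of [u]. *)
Definition arrow_bound (s u t : ty) : Prop :=
  exists sel, (forall p, In p sel -> In p (arrows u) /\ sub s (fst p)) /\
    sub (meet (map snd sel)) t.

Lemma arrow_bound_sub s u t t' : arrow_bound s u t -> sub t t' -> arrow_bound s u t'.
Proof. intros [sel [H1 H2]] H. exists sel; split; auto. eapply sub_trans; eauto. Qed.

Lemma arrow_bound_single s u p : In p (arrows u) -> sub s (fst p) -> wf_ty (snd p) = true ->
  arrow_bound s u (snd p).
Proof.
  intros Hin Hs Hw. exists [p]; split; [intros q [<-|[]]; auto | apply sub_int_l; auto].
Qed.

Lemma arrow_bound_meet s u l : wf_ty u = true -> (forall t, In t l -> arrow_bound s u t) ->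
  arrow_bound s u (meet l).
Proof.
  induction l as [|t l IHl]; simpl; intros Hw H.
  - exists []; split; [intros; contradiction | apply sub_refl; reflexivity].
  - destruct (H t (or_introl eq_refl)) as [sel1 [Hsel1 Hs1]].
    destruct IHl as [sel2 [Hsel2 Hs2]]; auto.
    assert (Hsel : forall p, In p (sel1 ++ sel2) -> In p (arrows u) /\ sub s (fst p))
      by (intros p Hp; apply in_app_or in Hp as [Hp|Hp]; auto).
    assert (Hwsel : forall t', In t' (map snd (sel1 ++ sel2)) -> wf_ty t' = true).
    { intros t' Ht'. apply in_map_iff in Ht' as [p [<- Hp]].
      apply (arrows_wf u); auto. apply Hsel; auto. }
    exists (sel1 ++ sel2); split; auto.
    apply sub_int_glb; eapply sub_trans; try eassumption;
      apply meet_incl; auto using incl_map, incl_appl, incl_appr, incl_refl.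
Qed.

Lemma arrow_bound_arrows s u v t : wf_ty u = true -> arrow_bound s v t ->
  (forall p, In p (arrows v) -> sub s (fst p) -> arrow_bound s u (snd p)) ->
  arrow_bound s u t.
Proof.
  intros Hw [sel [Hsel Hs]] H. eapply arrow_bound_sub; [|exact Hs].
  apply arrow_bound_meet; auto.
  intros t' Ht'. apply in_map_iff in Ht' as [p [<- Hp]]. apply H; apply Hsel; auto.
Qed.

Lemma sub_arrows u v : sub u v -> forall s p, In p (arrows v) -> sub s (fst p) ->
  arrow_bound s u (snd p).
Proof.
  induction 1; intros s0 p Hp Hs0; simpl in Hp;
    rewrite ?rty_arrows in Hp by assumption; try contradiction.
  - apply arrow_bound_single; auto. apply (arrows_wf s); auto.
  - apply (arrow_bound_arrows _ _ t); [apply (sub_wf _ _ H) | |]; auto.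
  - destruct Hp as [<-|[]].
    exists []; split; [intros; contradiction | apply sub_refl; reflexivity].
  - apply arrow_bound_single; [simpl; apply in_or_app; auto | auto | apply (arrows_wf s); auto].
  - apply arrow_bound_single; [simpl; apply in_or_app; auto | auto | apply (arrows_wf t); auto].
  - apply in_app_or in Hp as [Hp|Hp]; auto.
  - destruct Hp as [<-|[]]; simpl in *.
    exists [(s, t1); (s, t2)]; split; [intros q [<-|[<-|[]]]; simpl; auto|].
    simpl. apply sub_int_glb; [apply sub_int_l; simpl; rewrite ?H1; auto|].
    eapply sub_trans; [apply sub_int_r|apply sub_int_l]; simpl; rewrite ?H1; auto.
  - destruct Hp as [<-|[]]; simpl in *.
    destruct (sub_wf _ _ H) as [Hw2 Hw1]. destruct (sub_wf _ _ H0) as [Hw3 Hw4].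
    exists [(s1, t1)]; split.
    + intros q [<-|[]]; split; simpl; auto. eapply sub_trans; eauto.
    + eapply sub_trans; [apply sub_int_l|]; simpl; auto.
Qed.

Lemma sub_arr_inv X Y s t : sub (TArr X Y) (TArr s t) -> (sub s X /\ sub Y t) \/ sub TOmega t.
Proof.
  intros H. destruct (sub_wf _ _ H) as [HwXY Hwst]; simpl in HwXY, Hwst.
  apply andb_true_iff in HwXY as [_ HwY]. apply andb_true_iff in Hwst as [Hws _].
  destruct (sub_arrows _ _ H s (s, t)) as [[|p sel] [Hsel Hmeet]];
    [left; auto | apply sub_refl; auto | right; exact Hmeet |].
  destruct (Hsel p (or_introl eq_refl)) as [[<-|[]] HsX].
  left; split; auto. eapply sub_trans; [|exact Hmeet].
  apply meet_glb; auto. intros t' Ht'. apply in_map_iff in Ht' as [q [<- Hq]].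
  destruct (Hsel q Hq) as [[<-|[]] _]. apply sub_refl; auto.
Qed.

Fixpoint omega_like (t : ty) : bool :=
  match t with
  | TOmega => true
  | TArr _ b => omega_like b
  | TInt a b => omega_like a && omega_like b
  | _ => false
  end.

Lemma rty_not_omega_like r : is_rty r = true -> omega_like r = false.
Proof.
  induction r; simpl; intros H; try discriminate; auto.
  apply andb_true_iff in H as [H1 _]; rewrite IHr1; auto.
Qed.

Lemma sub_omega_like u v : sub u v -> omega_like u = true -> omega_like v = true.
Proof.
  induction 1; simpl; intros Hu; simpl in Hu; rewrite ?andb_true_iff in *;
    rewrite ?rty_not_omega_like in Hu by assumption; intuition discriminate.
Qed.

Lemma rty_not_above_omega r : is_rty r = true -> ~ sub TOmega r.
Proof.
  intros Hr Hsub. apply sub_omega_like in Hsub; [|reflexivity].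
  rewrite rty_not_omega_like in Hsub; [discriminate | exact Hr].
Qed.

Lemma sub_arr_rty_inv X Y s r : is_rty r = true -> sub (TArr X Y) (TArr s r) ->
  sub s X /\ sub Y r.
Proof.
  intros Hr H. destruct (sub_arr_inv _ _ _ _ H) as [H'|Hom]; auto.
  exfalso; exact (rty_not_above_omega r Hr Hom).
Qed.

Lemma rty_arr_not_above_omega s r : is_rty r = true -> ~ sub TOmega (TArr s r).
Proof.
  intros Hr H. apply (rty_not_above_omega r Hr).
  assert (Hsub : sub (TArr TOmega TOmega) (TArr s r))
    by (eapply sub_trans; [apply sub_omega; reflexivity | exact H]).
  exact (proj2 (sub_arr_rty_inv _ _ _ _ Hr Hsub)).
Qed.

Lemma typed_var_inv G x t A : typed G (Var x) t ->
  (forall u, In (x, u) G -> u = A) -> wf_ty A = true -> sub A t.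
Proof.
  intros Hty HG HA. remember (Var x) as P eqn:HP.
  induction Hty; try discriminate.
  - injection HP as ->. rewrite (HG s H). apply sub_refl; auto.
  - apply sub_int_glb; auto.
  - apply sub_omega; auto.
  - eapply sub_trans; eauto.
Qed.

Lemma typed_app_var_inv G f N t D Cd : typed G (App (Var f) N) t ->
  (forall u, In (f, u) G -> u = TArr D Cd) -> wf_ty (TArr D Cd) = true ->
  sub Cd t /\ (typed G N D \/ sub TOmega t).
Proof.
  intros Hty HG HA.
  assert (HwCd : wf_ty Cd = true) by (simpl in HA; apply andb_true_iff in HA; tauto).
  remember (App (Var f) N) as P eqn:HP.
  induction Hty; try discriminate.
  - injection HP as -> ->.
    destruct (sub_arr_inv _ _ _ _ (typed_var_inv _ _ _ _ Hty1 HG HA)) as [[HsD HCdt]|Hom].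
    + split; [exact HCdt | left; eapply ty_sub; eauto].
    + split; [eapply sub_trans; [apply sub_omega|]; eauto | right; exact Hom].
  - destruct (IHHty1 HP HG) as [H1 [HN1|Hom1]], (IHHty2 HP HG) as [H2 [HN2|Hom2]];
      split; auto using sub_int_glb.
  - split; [apply sub_omega; auto | right; apply sub_refl; reflexivity].
  - destruct (IHHty HP HG) as [H1 H2]. split; [eapply sub_trans; eauto|].
    destruct H2; [left | right; eapply sub_trans]; eauto.
Qed.

(** * Translating record concatenation *)

Lemma existsb_eqb_In l L : existsb (Nat.eqb l) L = true <-> In l L.
Proof.
  rewrite existsb_exists. split.
  - intros [x [Hx He]]. apply Nat.eqb_eq in He; subst; auto.
  - intros H; exists l; split; auto. apply Nat.eqb_refl.
Qed.

Lemma sub_lbl u v : sub u v -> incl (lbl_ty v) (lbl_ty u).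
Proof.
  induction 1; unfold incl in *; intros x; simpl in *; rewrite ?in_app_iff in *; simpl in *;
    rewrite ?in_app_iff in *; firstorder.
Qed.

(* [L] is the set of labels masked at the current record level; an arrow starts a
   new level. *)
Fixpoint tr_mask (L : list label) (s : ty) : cty :=
  match s with
  | TAtom a => CAtom a
  | TOmega => COmega
  | TArr a b => CArr (tr_mask [] a) (tr_mask [] b)
  | TInt a b => CInt (tr_mask L a) (tr_mask L b)
  | TEmpty => CCons CRec COmega
  | TField l a => if existsb (Nat.eqb l) L then CCons CRec COmega
                  else CCons CRec (CCons (CLab l) (tr_mask [] a))
  | TPlus a b => CInt (tr_mask (lbl_ty b ++ L) a) (tr_mask L b)
  end.

Lemma tr_mask_ext s L L' : (forall l, In l L <-> In l L') -> tr_mask L s = tr_mask L' s.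
Proof.
  revert L L'; induction s; simpl; intros L L' H; auto.
  - rewrite (IHs1 L L'), (IHs2 L L'); auto.
  - replace (existsb (Nat.eqb l) L') with (existsb (Nat.eqb l) L); auto.
    apply eq_true_iff_eq. rewrite !existsb_eqb_In. apply H.
  - rewrite (IHs1 _ (lbl_ty s2 ++ L')), (IHs2 L L'); auto.
    intros l. rewrite !in_app_iff, H. tauto.
Qed.

Lemma rty_tr_mask_below_empty r L : is_rty r = true -> csub (tr_mask L r) (CCons CRec COmega).
Proof.
  revert L; induction r; simpl; intros L H; try discriminate.
  - apply andb_true_iff in H as [H1 _]. eapply csub_trans; [apply csub_int_l | auto].
  - apply csub_refl.
  - destruct existsb; [apply csub_refl | apply csub_cons, csub_omega].
  - apply andb_true_iff in H as [_ H2]. eapply csub_trans; [apply csub_int_r | auto].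
Qed.

Ltac csub_meet := first
  [ apply csub_refl
  | eassumption
  | apply csub_int_glb; csub_meet
  | eapply csub_trans; [apply csub_int_l | csub_meet]
  | eapply csub_trans; [apply csub_int_r | csub_meet] ].

Lemma tr_mask_sub u v L : sub u v -> csub (tr_mask L u) (tr_mask L v).
Proof.
  intros H; revert L; induction H; intros L; simpl.
  - apply csub_refl.
  - eapply csub_trans; eauto.
  - apply csub_omega.
  - apply csub_omega_arr.
  - apply csub_int_l.
  - apply csub_int_r.
  - apply csub_int_glb; auto.
  - apply csub_arr_dist.
  - apply csub_arr; auto.
  - destruct existsb; [apply csub_refl | apply csub_cons, csub_omega].
  - destruct existsb; [apply csub_int_l|].
    eapply csub_trans; [apply csub_cons_int | apply csub_cons, csub_cons_int].
  - destruct existsb; [apply csub_refl | apply csub_cons, csub_cons; auto].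
  - apply csub_int_l.
  - apply csub_int_glb; [apply csub_refl | apply rty_tr_mask_below_empty; auto].
  - apply csub_int_r.
  - apply csub_int_glb; [apply rty_tr_mask_below_empty; auto | apply csub_refl].
  - rewrite <- app_assoc. csub_meet.
  - rewrite <- app_assoc. csub_meet.
  - csub_meet.
  - csub_meet.
  - rewrite Nat.eqb_refl; simpl. apply csub_int_r.
  - rewrite Nat.eqb_refl; simpl. apply csub_int_glb; [|apply csub_refl].
    eapply csub_trans; [apply csub_int_l | apply (rty_tr_mask_below_empty (TField l t)); auto].
  - rewrite (proj2 (Nat.eqb_neq _ _) H); simpl. csub_meet.
  - rewrite (proj2 (Nat.eqb_neq _ _) H); simpl. csub_meet.
  - apply csub_int_glb; [eapply csub_trans; [apply csub_int_l | auto] | apply csub_int_r].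
  - rewrite (tr_mask_ext r (lbl_ty r1 ++ L) (lbl_ty r2 ++ L)).
    + apply csub_int_glb; [apply csub_int_l | eapply csub_trans; [apply csub_int_r | auto]].
    + intros l. rewrite !in_app_iff.
      pose proof (sub_lbl _ _ H2); pose proof (sub_lbl _ _ H3). firstorder.
Qed.

Lemma tr_tr_mask Ls s c : tr Ls s = Some c -> tr_mask [] s = c.
Proof.
  revert c; induction s; simpl; intros c H; try congruence.
  - destruct (tr Ls s1), (tr Ls s2); try discriminate.
    injection H as <-. rewrite (IHs1 _ eq_refl), (IHs2 _ eq_refl); auto.
  - destruct (tr Ls s1), (tr Ls s2); try discriminate.
    injection H as <-. rewrite (IHs1 _ eq_refl), (IHs2 _ eq_refl); auto.
  - destruct existsb; [|discriminate]. destruct (tr Ls s); [|discriminate].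
    injection H as <-. rewrite (IHs _ eq_refl); auto.
Qed.

Lemma trd_tr_mask Ls s : tr_defined Ls s -> trd Ls s = tr_mask [] s.
Proof.
  unfold tr_defined, trd; intros H. destruct (tr Ls s) eqn:E; [|congruence].
  symmetry; eapply tr_tr_mask; eauto.
Qed.

Lemma tr_defined_arr Ls a b : tr_defined Ls (TArr a b) -> tr_defined Ls a /\ tr_defined Ls b.
Proof.
  unfold tr_defined; simpl; intros H. destruct (tr Ls a), (tr Ls b); split; congruence.
Qed.

Fixpoint mask_fields (L : list label) (x : cty) : cty :=
  match x with
  | CCons (CLab l) _ => if existsb (Nat.eqb l) L then COmega else x
  | CInt a b => CInt (mask_fields L a) (mask_fields L b)
  | _ => x
  end.

Fixpoint mask (L : list label) (x : cty) : cty :=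
  match x with
  | CCons CRec y => CCons CRec (mask_fields L y)
  | CInt a b => CInt (mask L a) (mask L b)
  | _ => x
  end.

Lemma mask_fields_mono L x y : csub x y -> csub (mask_fields L x) (mask_fields L y).
Proof.
  induction 1; simpl; eauto using csub.
  - destruct c; [|destruct existsb]; eauto using csub.
  - destruct c; [|destruct existsb]; eauto using csub.
Qed.

Lemma mask_mono L x y : csub x y -> csub (mask L x) (mask L y).
Proof.
  induction 1; simpl; eauto using csub.
  - destruct c; eauto using csub, mask_fields_mono.
  - destruct c; eauto using csub.
Qed.

Lemma mask_tr_mask r L L' : is_rty r = true -> mask L (tr_mask L' r) = tr_mask (L' ++ L) r.
Proof.
  revert L'; induction r; simpl; intros L' H; try discriminate.
  - apply andb_true_iff in H as [H1 H2]. rewrite IHr1, IHr2; auto.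
  - reflexivity.
  - rewrite existsb_app. repeat (destruct existsb; simpl); reflexivity.
  - apply andb_true_iff in H as [H1 H2]. rewrite IHr1, IHr2, app_assoc; auto.
Qed.

Inductive bounded_rec (Ls : list label) (k : nat) : cty -> Prop :=
| bounded_empty : bounded_rec Ls k (CCons CRec COmega)
| bounded_field l b : In l Ls -> level b <= k -> bounded_rec Ls k (CCons CRec (CCons (CLab l) b))
| bounded_int x y : bounded_rec Ls k x -> bounded_rec Ls k y -> bounded_rec Ls k (CInt x y).

Lemma bounded_rec_mask Ls k L x : bounded_rec Ls k x -> bounded_rec Ls k (mask L x).
Proof.
  induction 1; simpl; [|destruct existsb|]; constructor; auto.
Qed.

Lemma bounded_rec_tr Ls k r : is_rty r = true -> tr_defined Ls r -> level (tr_mask [] r) <= k ->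
  bounded_rec Ls k (tr_mask [] r).
Proof.
  unfold tr_defined. induction r; simpl; intros H Hd Hl; try discriminate; try congruence.
  - apply andb_true_iff in H as [H1 H2].
    destruct (tr Ls r1), (tr Ls r2); try congruence.
    constructor; [apply IHr1 | apply IHr2]; auto; try congruence; lia.
  - constructor.
  - destruct (existsb (Nat.eqb l) Ls) eqn:E; [|congruence].
    constructor; [apply existsb_eqb_In; auto | lia].
Qed.

Lemma csubst_tr_mask S L s : csubst S (tr_mask L s) = tr_mask L s.
Proof.
  revert L; induction s; simpl; intros L; rewrite ?IHs, ?IHs1, ?IHs2; auto.
  destruct existsb; simpl; rewrite ?IHs; auto.
Qed.

Lemma csubst_mono S x y : csub x y -> csub (csubst S x) (csubst S y).
Proof. induction 1; simpl; eauto using csub. Qed.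

Lemma fold_meet_below_init (g : label -> cty) ls x :
  csub (fold_left (fun acc l => CInt acc (g l)) ls x) x.
Proof.
  revert x; induction ls; simpl; intros x; [apply csub_refl|].
  eapply csub_trans; [apply IHls | apply csub_int_l].
Qed.

Lemma fold_meet_below_in (g : label -> cty) ls x l : In l ls ->
  csub (fold_left (fun acc l => CInt acc (g l)) ls x) (g l).
Proof.
  revert x; induction ls; simpl; intros x Hin; [contradiction|].
  destruct Hin as [<-|Hin]; auto.
  eapply csub_trans; [apply fold_meet_below_init | apply csub_int_r].
Qed.

Section Mixin.

Variables (Ls : list label) (k : nat) (D : repository) (M : term) (sM r1 r2 : ty).
Hypothesis HM : In (M, mixin_cty Ls sM r1 r2) D.
Hypotheses (Hd0 : tr_defined Ls sM) (Hd1 : tr_defined Ls r1) (Hd2 : tr_defined Ls r2).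

Lemma mixin_main_type : ctyped D k (Comb M)
  (CArr (CArr (tr_mask [] sM) (tr_mask [] r1)) (CArr (tr_mask [] sM) (tr_mask [] r2))).
Proof.
  eapply cty_sub; [apply (cty_var _ _ _ _ CTVar HM); intros; apply le_0_n|].
  eapply csub_trans; [apply csubst_mono, fold_meet_below_init|].
  rewrite !trd_tr_mask by auto. simpl. rewrite !csubst_tr_mask. apply csub_refl.
Qed.

Lemma mixin_field_type l b : In l Ls -> ~ In l (lbl_ty r2) -> level b <= k ->
  ctyped D k (Comb M) (CArr (CArr (tr_mask [] sM) (CCons CRec (CCons (CLab l) b)))
                            (CArr (tr_mask [] sM) (CCons CRec (CCons (CLab l) b)))).
Proof.
  intros Hl Hl2 Hb.
  set (S := fun a => if Nat.eqb a l then b else CTVar a).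
  assert (HS : forall a, level (S a) <= k)
    by (intros a; unfold S; destruct (Nat.eqb a l); simpl; lia).
  eapply cty_sub; [apply (cty_var _ _ _ _ S HM HS)|].
  eapply csub_trans; [apply csubst_mono, fold_meet_below_in with (l := l)|].
  - apply filter_In; split; auto.
    destruct (existsb (Nat.eqb l) (lbl_ty r2)) eqn:E; auto.
    exfalso; apply Hl2, existsb_eqb_In; exact E.
  - rewrite !trd_tr_mask by auto. simpl. rewrite !csubst_tr_mask.
    unfold S. rewrite Nat.eqb_refl. apply csub_refl.
Qed.

Lemma mixin_app_fields E b : is_rty r2 = true ->
  ctyped D k (CApp (Comb M) E) (CArr (tr_mask [] sM) (tr_mask [] r2)) ->
  bounded_rec Ls k b -> ctyped D k E (CArr (tr_mask [] sM) b) ->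
  ctyped D k (CApp (Comb M) E) (CArr (tr_mask [] sM) (mask (lbl_ty r2) b)).
Proof.
  intros Hr2 HME Hb. induction Hb as [|l b Hl Hlev|x y Hx IHx Hy IHy]; intros HE; simpl.
  - eapply cty_sub; [exact HME|].
    apply csub_arr; [apply csub_refl | apply rty_tr_mask_below_empty; auto].
  - destruct (existsb (Nat.eqb l) (lbl_ty r2)) eqn:El.
    + eapply cty_sub; [exact HME|].
      apply csub_arr; [apply csub_refl | apply rty_tr_mask_below_empty; auto].
    + eapply cty_app; [apply mixin_field_type; auto | exact HE].
      rewrite <- existsb_eqb_In, El; discriminate.
  - eapply cty_sub; [apply cty_int; [apply IHx | apply IHy]|apply csub_arr_dist];
      (eapply cty_sub; [exact HE | apply csub_arr; [apply csub_refl|]]);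
      [apply csub_int_l | apply csub_int_r].
Qed.

End Mixin.

(** * The invariant along a pipeline *)

Definition pipe_invariant Ls k D G (P : term) (E : cterm) : Prop :=
  forall s r, is_rty r = true -> typed G P (TArr s r) ->
  exists b, bounded_rec Ls k b /\ csub b (tr_mask [] r) /\ ctyped D k E (CArr (tr_mask [] s) b).

Lemma class_invariant Ls k D G C x sC rC :
  In (C, trd Ls (TArr sC rC)) D -> tr_defined Ls (TArr sC rC) ->
  wf_ty sC = true -> is_rty rC = true -> level (trd Ls rC) <= k ->
  (forall u, In (x, u) G -> u = TArr sC rC) ->
  pipe_invariant Ls k D G (Var x) (Comb C).
Proof.
  intros HC Hd HwC HrC Hlev HG s r Hr Hty.
  destruct (tr_defined_arr _ _ _ Hd) as [_ HdrC].
  rewrite trd_tr_mask in Hlev by auto.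
  assert (HwA : wf_ty (TArr sC rC) = true) by (simpl; rewrite HwC, rty_wf; auto).
  destruct (sub_arr_rty_inv _ _ _ _ Hr (typed_var_inv _ _ _ _ Hty HG HwA)) as [Hs HrCr].
  exists (tr_mask [] rC); split; [|split].
  - apply bounded_rec_tr; auto.
  - apply tr_mask_sub; auto.
  - eapply cty_sub; [apply (cty_var _ _ _ _ CTVar HC); intros; apply le_0_n|].
    rewrite trd_tr_mask, csubst_tr_mask by auto.
    apply csub_arr; [apply tr_mask_sub; auto | apply csub_refl].
Qed.

Lemma mixin_step_invariant Ls k D G M x P E r sM r1 r2 :
  In (M, mixin_cty Ls sM r1 r2) D -> wf_ty sM = true ->
  is_rty r1 = true -> is_rty r2 = true -> is_rty r = true ->
  tr_defined Ls sM -> tr_defined Ls r1 -> tr_defined Ls r2 -> level (trd Ls r2) <= k ->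
  (forall u, In (x, u) G -> u = TArr (TArr sM (TInt r r1)) (TArr sM (TPlus r r2))) ->
  pipe_invariant Ls k D G P E -> pipe_invariant Ls k D G (App (Var x) P) (CApp (Comb M) E).
Proof.
  intros HM HwM Hr1 Hr2 Hr Hd0 Hd1 Hd2 Hlev HG IH s' r' Hr' Hty.
  rewrite trd_tr_mask in Hlev by auto.
  assert (Hrr1 : is_rty (TInt r r1) = true) by (simpl; rewrite Hr, Hr1; auto).
  assert (HwA : wf_ty (TArr (TArr sM (TInt r r1)) (TArr sM (TPlus r r2))) = true)
    by (simpl; rewrite HwM, Hr, Hr2, (rty_wf r), (rty_wf r1); auto).
  destruct (typed_app_var_inv _ _ _ _ _ _ Hty HG HwA) as [Hsub [HtyP|Hom]];
    [|exfalso; exact (rty_arr_not_above_omega _ _ Hr' Hom)].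
  destruct (sub_arr_rty_inv _ _ _ _ Hr' Hsub) as [Hs' Hplus].
  destruct (IH sM (TInt r r1) Hrr1 HtyP) as (b & Hb & Hbr & HE).
  assert (HME : ctyped D k (CApp (Comb M) E) (CArr (tr_mask [] sM) (tr_mask [] r2))).
  { eapply cty_app; [eapply mixin_main_type; eauto|].
    eapply cty_sub; [exact HE|].
    apply csub_arr; [apply csub_refl | eapply csub_trans; [exact Hbr | apply csub_int_r]]. }
  assert (Hmask : csub (mask (lbl_ty r2) b) (tr_mask (lbl_ty r2) r)).
  { change (lbl_ty r2) with ([] ++ lbl_ty r2) at 2. rewrite <- mask_tr_mask by auto.
    eapply csub_trans; [apply mask_mono, Hbr | apply csub_int_l]. }
  exists (CInt (tr_mask [] r2) (mask (lbl_ty r2) b)); split; [|split].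
  - constructor; [apply bounded_rec_tr | apply bounded_rec_mask]; auto.
  - eapply csub_trans; [|apply (tr_mask_sub _ _ [] Hplus)]; simpl; rewrite app_nil_r.
    apply csub_int_glb; [|apply csub_int_l].
    eapply csub_trans; [apply csub_int_r | exact Hmask].
  - eapply cty_sub; [apply cty_int; [exact HME | eapply mixin_app_fields; eauto]|].
    eapply csub_trans; [apply csub_arr_dist|].
    apply csub_arr; [apply tr_mask_sub; auto | apply csub_refl].
Qed.

Lemma pipe_invariant_fold Ls k D G (xM : term -> ty -> var) mixs P E :
  (forall p, In p mixs -> forall P E, pipe_invariant Ls k D G P E ->
     pipe_invariant Ls k D G (App (Var (xM (fst p) (snd p))) P) (CApp (Comb (fst p)) E)) ->
  pipe_invariant Ls k D G P E ->
  pipe_invariant Ls k D G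
    (fold_left (fun acc f => App (Var f) acc) (map (fun p => xM (fst p) (snd p)) mixs) P)
    (fold_left (fun acc M => CApp (Comb M) acc) (map fst mixs) E).
Proof.
  revert P E; induction mixs; simpl; intros P E Hstep HI; auto.
Qed.

Lemma in_repo_class Ls Cs Ms sigC rhoC sigM rho1M rho2M C : In C Cs ->
  In (C, trd Ls (TArr (sigC C) (rhoC C))) (repo Ls Cs Ms sigC rhoC sigM rho1M rho2M).
Proof.
  intros HC. apply in_or_app; left.
  apply (in_map (fun C => (C, trd Ls (TArr (sigC C) (rhoC C))))); auto.
Qed.

Lemma in_repo_mixin Ls Cs Ms sigC rhoC sigM rho1M rho2M M : In M Ms ->
  In (M, mixin_cty Ls (sigM M) (rho1M M) (rho2M M)) (repo Ls Cs Ms sigC rhoC sigM rho1M rho2M).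
Proof.
  intros HM. apply in_or_app; right.
  apply (in_map (fun M => (M, mixin_cty Ls (sigM M) (rho1M M) (rho2M M)))); auto.
Qed.

Lemma in_le_list_max x l : In x l -> x <= list_max l.
Proof.
  intros Hin. apply (proj1 (Forall_forall _ _) (proj1 (list_max_le l _) (le_n _))); auto.
Qed.

Theorem theorem5p5
  (Ls : list label) (Cs Ms : list term)
  (sigC rhoC sigM rho1M rho2M : term -> ty)
  (* setting: classes *)
  (HC : forall C, In C Cs ->
     is_class C /\ wf_ty (sigC C) = true /\ is_rty (rhoC C) = true /\
     tr_defined Ls (TArr (sigC C) (rhoC C)) /\
     typed [] C (TArr (sigC C) (rhoC C)))
  (* setting: mixins *)
  (HM : forall M, In M Ms ->
     is_mixin M /\ wf_ty (sigM M) = true /\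
     is_rty (rho1M M) = true /\ is_rty (rho2M M) = true /\
     tr_defined Ls (sigM M) /\ tr_defined Ls (rho1M M) /\ tr_defined Ls (rho2M M) /\
     (forall r, is_rty r = true ->
        typed [] M (TArr (TArr (sigM M) (TInt r (rho1M M)))
                         (TArr (sigM M) (TPlus r (rho2M M))))) /\
     lbl_ty (rho2M M) <> [] /\ incl (lbl_ty (rho2M M)) Ls)
  (* distinct term variables x_C and x^rho_M *)
  (xC : term -> var) (xM : term -> ty -> var)
  (HxC : forall C C', In C Cs -> In C' Cs -> xC C = xC C' -> C = C')
  (HxM : forall M M' r r', In M Ms -> In M' Ms -> is_rty r = true -> is_rty r' = true ->
     xM M r = xM M' r' -> M = M' /\ r = r')
  (HxCM : forall C M r, In C Cs -> In M Ms -> xC C <> xM M r)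
  (* the basis Gamma *)
  (G : basis)
  (HG : forall p, In p G ->
     (exists C, In C Cs /\ p = (xC C, TArr (sigC C) (rhoC C))) \/
     (exists M r, In M Ms /\ is_rty r = true /\ tr_defined Ls r /\
        p = (xM M r, TArr (TArr (sigM M) (TInt r (rho1M M)))
                          (TArr (sigM M) (TPlus r (rho2M M))))))
  (sigma rho : ty)
  (Hsig : wf_ty sigma = true) (Hrho : is_rty rho = true)
  (Hdef : tr_defined Ls (TArr sigma rho))
  (k : nat)
  (Hk : k = list_max (map (fun C => level (trd Ls (rhoC C))) Cs ++
                      map (fun M => level (trd Ls (rho2M M))) Ms ++
                      [level (trd Ls rho)]))
  (C : term) (HCin : In C Cs)
  (mixs : list (term * ty))
  (Hmixs : forall p, In p mixs ->
     In (fst p) Ms /\ is_rty (snd p) = true /\ tr_defined Ls (snd p)) :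
  typed G (pipe_vars (xC C) (map (fun p => xM (fst p) (snd p)) mixs)) (TArr sigma rho) ->
  ctyped (repo Ls Cs Ms sigC rhoC sigM rho1M rho2M) k
         (pipe_combs C (map fst mixs)) (trd Ls (TArr sigma rho)).
Proof.
  intros Hty.
  set (D := repo Ls Cs Ms sigC rhoC sigM rho1M rho2M).
  destruct (HC C HCin) as (_ & HwC & HrC & HdC & _).
  assert (Hstart : pipe_invariant Ls k D G (Var (xC C)) (Comb C)).
  { apply (class_invariant _ _ _ _ _ _ (sigC C) (rhoC C)); auto.
    - apply in_repo_class; auto.
    - rewrite Hk; apply in_le_list_max, in_or_app; left.
      apply (in_map (fun C => level (trd Ls (rhoC C)))); auto.
    - intros u Hu. destruct (HG _ Hu) as [(C' & HC' & He)|(M & r & HM' & _ & _ & He)];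
        injection He as Hx Hu'.
      + rewrite (HxC C C' HCin HC' Hx); auto.
      + exfalso; exact (HxCM C M r HCin HM' Hx). }
  assert (Hstep : forall p, In p mixs -> forall P E, pipe_invariant Ls k D G P E ->
     pipe_invariant Ls k D G (App (Var (xM (fst p) (snd p))) P) (CApp (Comb (fst p)) E)).
  { intros [M r] Hp P E HI. destruct (Hmixs _ Hp) as (HMin & Hr & _); simpl in *.
    destruct (HM M HMin) as (_ & HwM & Hr1 & Hr2 & Hd0 & Hd1 & Hd2 & _).
    apply (mixin_step_invariant _ _ _ _ _ _ _ _ r (sigM M) (rho1M M) (rho2M M)); auto.
    - apply in_repo_mixin; auto.
    - rewrite Hk; apply in_le_list_max, in_or_app; right; apply in_or_app; left.
      apply (in_map (fun M => level (trd Ls (rho2M M)))); auto.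
    - intros u Hu. destruct (HG _ Hu) as [(C' & HC' & He)|(M' & r' & HM' & Hr' & _ & He)];
        injection He as Hx Hu'.
      + exfalso; exact (HxCM C' M r HC' HMin (eq_sym Hx)).
      + destruct (HxM M M' r r' HMin HM' Hr Hr' Hx) as [-> ->]; auto. }
  destruct (pipe_invariant_fold _ _ _ _ xM mixs _ _ Hstep Hstart sigma rho Hrho Hty)
    as (b & _ & Hb & HE).
  rewrite trd_tr_mask by auto.
  eapply cty_sub; [exact HE | apply csub_arr; [apply csub_refl | exact Hb]].
Qed.
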